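(* In the two-asset bid-ask model described in the context, condition (NA2) holds if and only if, for all $t\le T-1$, $$\operatorname{ess\,sup}_{\mathcal{F}_t}S^a_{t+1}\ge S^a_t\quad\text{and}\quad S^b_t\ge\operatorname{ess\,inf}_{\mathcal{F}_t}S^b_{t+1}\quad\text{a.s.}$$
   Context: $(\Omega,\mathcal{F},(\mathcal{F}_t)_{t=0,\dots,T},\mathbb{P})$ filtered complete probability space, $\mathcal{F}_0$ trivial. $d=2$. For each $t$, $S^b_t,S^a_t$ are $\mathcal{F}_t$-measurable random variables with $0<S^b_t\le S^a_t$ a.s., and the solvency cone is $\mathbf{K}_t=\{x\in\mathbb{R}^2:\ x_1+y\,x_2\ge0\ \text{for all }y\in[S^b_t,S^a_t]\}$ (the cone generated by $S^a_te_1-e_2$ and $-S^b_te_1+e_2$). $L^0(\Gamma,\mathcal{F}_t)$: $\mathcal{F}_t$-measurable random vectors a.s. in $\Gamma$. $\mathsf{A}_{t,T}=\sum_{u=t}^TL^0(-\mathbf{K}_u,\mathcal{F}_u)$. (NA2): for every $t$ and $\eta_t\in L^0(\mathbb{R}^2,\mathcal{F}_t)$, if $(\eta_t+\mathsf{A}_{t,T})\cap L^0(\mathbf{K}_T,\mathcal{F}_T)\neq\emptyset$ then $\eta_t\in L^0(\mathbf{K}_t,\mathcal{F}_t)$. $\operatorname{ess\,sup}_{\mathcal{F}_t}$ and $\operatorname{ess\,inf}_{\mathcal{F}_t}$ denote the conditional essential supremum/infimum: the smallest (resp. largest) $\mathcal{F}_t$-measurable extended random variable a.s. dominating (resp. dominated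 by) the given variable. *)

From HB Require Import structures.
From mathcomp Require Import all_boot all_order all_algebra.
From mathcomp Require Import all_classical all_reals all_analysis.
From mathcomp Require Import measurable_realfun.
Set Implicit Arguments. Unset Strict Implicit. Unset Printing Implicit Defensive.
Import Order.TTheory GRing.Theory Num.Theory.
Local Open Scope classical_set_scope.
Local Open Scope ring_scope.

Section defs.
Context {d : measure_display} {Omega : measurableType d} {R : realType}.
Variable P : probability Omega R.

Definition Gmeas {dY} {Y : measurableType dY} (G : set (set Omega)) (f : Omega -> Y) :=
  forall B : set Y, measurable B -> G (f @^-1` B).

Definition Gmeas2 (G : set (set Omega)) (f : Omega -> R * R) :=
  Gmeas G (fun w => (f w).1) /\ Gmeas G (fun w => (f w).2).

Definition is_filtration (F : nat -> set (set Omega)) (N : nat) :=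
  (forall t, (t <= N)%N -> sigma_algebra setT (F t)) /\
  (forall t, (t <= N)%N -> F t `<=` measurable) /\
  (forall s t, (s <= t)%N -> (t <= N)%N -> F s `<=` F t).

Definition P_complete :=
  forall (Nn A : set Omega), measurable Nn -> P Nn = 0%E -> A `<=` Nn -> measurable A.

Definition trivial_sigma (G : set (set Omega)) :=
  forall A, G A -> P A = 0%E \/ P A = 1%E.

Definition inK (sb sa : R) (x : R * R) :=
  forall y : R, sb <= y <= sa -> 0 <= x.1 + y * x.2.

Definition L0K (F : nat -> set (set Omega)) (Sb Sa : nat -> Omega -> R) (t : nat)
    (X : Omega -> R * R) :=
  Gmeas2 (F t) X /\ {ae P, forall w, inK (Sb t w) (Sa t w) (X w)}.

Definition L0mK (F : nat -> set (set Omega)) (Sb Sa : nat -> Omega -> R) (t : nat)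
    (X : Omega -> R * R) :=
  Gmeas2 (F t) X /\ {ae P, forall w, inK (Sb t w) (Sa t w) (- (X w).1, - (X w).2)}.

(* eta + A_{t,N} meets L^0(K_N, F_N) *)
Definition meets_solvent (F : nat -> set (set Omega)) (Sb Sa : nat -> Omega -> R)
    (N t : nat) (eta : Omega -> R * R) :=
  exists xi : nat -> Omega -> R * R,
    (forall u, (t <= u)%N -> (u <= N)%N -> L0mK F Sb Sa u (xi u)) /\
    L0K F Sb Sa N (fun w => ((eta w).1 + \sum_(t <= u < N.+1) (xi u w).1,
                             (eta w).2 + \sum_(t <= u < N.+1) (xi u w).2)).

Definition NA2 (F : nat -> set (set Omega)) (Sb Sa : nat -> Omega -> R) (N : nat) :=
  forall t, (t <= N)%N -> forall eta : Omega -> R * R, Gmeas2 (F t) eta ->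
    meets_solvent F Sb Sa N t eta -> L0K F Sb Sa t eta.

Definition is_cond_ess_sup (G : set (set Omega)) (X : Omega -> R) (Y : Omega -> \bar R) :=
  Gmeas G Y /\ {ae P, forall w, ((X w)%:E <= Y w)%E} /\
  (forall Z : Omega -> \bar R, Gmeas G Z -> {ae P, forall w, ((X w)%:E <= Z w)%E} ->
     {ae P, forall w, (Y w <= Z w)%E}).

Definition is_cond_ess_inf (G : set (set Omega)) (X : Omega -> R) (Y : Omega -> \bar R) :=
  Gmeas G Y /\ {ae P, forall w, (Y w <= (X w)%:E)%E} /\
  (forall Z : Omega -> \bar R, Gmeas G Z -> {ae P, forall w, (Z w <= (X w)%:E)%E} ->
     {ae P, forall w, (Z w <= Y w)%E}).

End defs.

From HB Require Import structures.
From mathcomp Require Import all_boot all_order all_algebra.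
From mathcomp Require Import all_classical all_reals all_analysis.
From mathcomp Require Import measurable_realfun.
From mathcomp Require Import lra zify.
Import Order.TTheory GRing.Theory Num.Theory.
Local Open Scope classical_set_scope.
Local Open Scope ring_scope.
Set Implicit Arguments. Unset Strict Implicit. Unset Printing Implicit Defensive.

(* (NA2) is equivalent to the one-period statement that every F_t-measurable
   position solvent at time t+1 is already solvent at time t: one direction
   books the position as a single trade at t+1, the other is a backward
   induction on the partial sums of the trades.  For a G-measurable position
   z, solvency at the ask sa' gives sa' <= q on the G-measurable event
   {z2 < 0, z1 + q z2 < 0} for every rational q; such a bound passes to
   ess sup_G sa' and, if sa <= ess sup_G sa', to sa.
   Conversely, on {ess sup_G sa' < sa} the position (ess sup_G sa', -1) is
   solvent at (sb', sa') but not at (sb, sa).  The bid side follows by the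
   reflection x2 |-> -x2, which swaps bid and ask and turns ess inf into
   ess sup. *)

Lemma measurable_fun_mem d (T : measurableType d) (B : set T) :
  measurable B -> measurable_fun setT (fun w => w \in B).
Proof.
move=> mB; apply: (measurable_fun_bool true) => //.
rewrite setTI (_ : _ @^-1` _ = B) //.
by apply/seteqP; split => w /=; [move/set_mem|move/mem_set].
Qed.

Lemma ratr_between (R : realType) (x y : \bar R) : (x < y)%E ->
  exists q : rat, (x < (ratr q)%:E < y)%E.
Proof.
case: x => [r| |]; case: y => [s| |] //=.
- by rewrite lte_fin => /rat_in_itvoo[q]; rewrite in_itv /= => qrs; exists q.
- move=> _; have /rat_in_itvoo[q] : r < r + 1 by rewrite ltrDl.
  by rewrite in_itv /= => /andP[rq _]; exists q; rewrite lte_fin rq ltry.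
- move=> _; have /rat_in_itvoo[q] : s - 1 < s by rewrite ltrBlDr ltrDl.
  by rewrite in_itv /= => /andP[_ qs]; exists q; rewrite lte_fin qs ltNyr.
- by exists 0; rewrite ltNyr ltry.
Qed.

Section sub_sigma_algebra.
Context {d : measure_display} {Omega : measurableType d}.
Variables (G : set (set Omega)) (sG : sigma_algebra setT G).

Lemma GmeasP dY (Y : measurableType dY) (f : Omega -> Y) :
  Gmeas G f <-> measurable_fun setT (f : g_sigma_algebraType G -> Y).
Proof.
split => [Gf _ B mB|mf B mB].
- by rewrite setTI (measurable_g_measurableTypeE sG); exact: Gf.
- by have := mf measurableT B mB; rewrite setTI (measurable_g_measurableTypeE sG).
Qed.

Lemma Gmeas_cst dY (Y : measurableType dY) (c : Y) : Gmeas G (fun _ => c).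
Proof. exact/GmeasP/measurable_cst. Qed.

Lemma Gmeas_sum (R : realType) (f : nat -> Omega -> R) m n :
  (forall u, (m <= u < n)%N -> Gmeas G (f u)) ->
  Gmeas G (fun w => \sum_(m <= u < n) f u w).
Proof.
elim: n => [|n IH] Gf.
  by under eq_fun do rewrite big_geq //; exact: Gmeas_cst.
have [mn|nm] := leqP m n; last first.
  by under eq_fun do rewrite big_geq //; exact: Gmeas_cst.
under eq_fun do rewrite big_nat_recr //=.
apply/GmeasP/measurable_funD; apply/GmeasP.
- by apply: IH => u /andP[mu un]; apply: Gf; rewrite mu ltnS ltnW.
- by apply: Gf; rewrite mn ltnSn.
Qed.

End sub_sigma_algebra.

Lemma Gmeas_comp {d} {Omega : measurableType d} dY (Y : measurableType dY)
    dZ (Z : measurableType dZ) (G : set (set Omega)) (f : Omega -> Y) (g : Y -> Z) :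
  Gmeas G f -> measurable_fun setT g -> Gmeas G (g \o f).
Proof. by move=> Gf mg B mB; have := mg measurableT B mB; rewrite setTI => /Gf. Qed.

Lemma Gmeas_oppr {d} {Omega : measurableType d} {R : realType} (G : set (set Omega))
    (X : Omega -> R) : Gmeas G X -> Gmeas G (fun w => - X w).
Proof. by move=> GX; apply: (Gmeas_comp GX); exact: oppr_measurable. Qed.

Lemma Gmeas_sub {d} {Omega : measurableType d} dY (Y : measurableType dY)
    (G G' : set (set Omega)) (f : Omega -> Y) :
  G `<=` G' -> Gmeas G f -> Gmeas G' f.
Proof. by move=> GG' Gf B mB; exact/GG'/Gf. Qed.

Lemma ae_forall_count {d} {T : measurableType d} {R : realType}
    (mu : {measure set T -> \bar R}) (I : countType) (Q : I -> T -> Prop) :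
  (forall i, {ae mu, forall w, Q i w}) -> {ae mu, forall w, forall i, Q i w}.
Proof.
move=> HQ; have : {ae mu, forall w, forall n, if unpickle n is Some i then Q i w else True}.
  by apply: ae_foralln => n; case: (unpickle n) => [i|]; [exact: HQ|exact: aeW].
by apply: filterS => w Qw i; have := Qw (pickle i); rewrite pickleK.
Qed.

Section conditional_ess_sup.
Context {d : measure_display} {Omega : measurableType d} {R : realType}.
Variable P : probability Omega R.
Variable G : set (set Omega).
Hypotheses (sG : sigma_algebra setT G) (GM : G `<=` measurable).

Lemma G_measurable (A : set Omega) : G A = measurable (A : set (g_sigma_algebraType G)).
Proof. by rewrite (measurable_g_measurableTypeE sG). Qed.

Definition is_cond_hull (A B : set Omega) :=
  [/\ G B, P.-negligible (A `\` B) &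
      forall C, G C -> P.-negligible (A `\` C) -> P.-negligible (B `\` C)].

Lemma exists_min_cover (A : set Omega) : exists B,
  [/\ G B, P.-negligible (A `\` B) &
      forall C, G C -> P.-negligible (A `\` C) -> (P B <= P C)%E].
Proof.
pose covers := [set B | G B /\ P.-negligible (A `\` B)].
pose m := ereal_inf (P @` covers).
have m_le1 : (m <= 1)%E.
  rewrite -(probability_setT P); apply: ereal_inf_lbound; exists setT => //.
  split; [rewrite G_measurable //|rewrite setDT; exact: negligible_set0].
have m_fin : m \is a fin_num.
  rewrite ge0_fin_numE ?(le_lt_trans m_le1) ?ltry //.
  by apply/ereal_infP => _ [B _ <-].
have /choice[Bn Bn_min] : forall n : nat, exists B, covers B /\ (P B < m + (n.+1%:R^-1)%:E)%E.
  move=> n; have e0 : 0 < n.+1%:R^-1 :> R by rewrite invr_gt0.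
  by have [_ [B coverB <-] PB] := lb_ereal_inf_adherent e0 m_fin; exists B.
have GB : G (\bigcap_n Bn n).
  rewrite G_measurable; apply: bigcapT_measurable => n; rewrite -G_measurable.
  by case: (Bn_min n) => -[].
exists (\bigcap_n Bn n); split => //.
- apply: (@negligibleS _ _ _ _ (\bigcup_n (A `\` Bn n))).
    by move=> w [Aw /existsNP[n /not_implyP[_ Bnw]]]; exists n.
  by apply: negligible_bigcup => n; case: (Bn_min n) => -[].
- move=> C GC AC; apply: (@le_trans _ _ m); last by apply: ereal_inf_lbound; exists C.
  apply/lee_addgt0Pr => e e0; have [k ke] := @ltr_add_invr R 0 e e0.
  rewrite add0r in ke; apply: (@le_trans _ _ (P (Bn k))).
    by apply: le_measure; rewrite ?inE; [exact: GM|apply: GM; case: (Bn_min k) => -[]|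
      move=> w; apply].
  by apply/ltW/(lt_le_trans (proj2 (Bn_min k))); rewrite leeD2l // lee_fin ltW.
Qed.

Lemma exists_cond_hull (A : set Omega) : exists B, is_cond_hull A B.
Proof.
have [B [GB AB Bmin]] := exists_min_cover A; exists B; split => // C GC AC.
have GBC : G (B `&` C) by rewrite G_measurable; apply: measurableI; rewrite -G_measurable.
have mB := GM GB; have mC := GM GC.
apply/negligibleP; first exact: measurableD.
apply/eqP; rewrite eq_le measure_ge0 andbT measureD //; last first.
  by rewrite (le_lt_trans (probability_le1 P mB)) ?ltry.
rewrite sube_le0 Bmin //.
by apply: (@negligibleS _ _ _ _ ((A `\` B) `|` (A `\` C))) => [w [Aw /not_andP[]]|];
  [left|right|exact: negligibleU].
Qed.

(* Y = inf_n (+oo on the hull of {q_n < X}, q_n elsewhere), q_n enumerating the rationals *)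
Lemma exists_cond_ess_sup (X : Omega -> R) : Gmeas measurable X ->
  exists Y, is_cond_ess_sup P G X Y.
Proof.
move=> mX; pose q n : rat := odflt 0 (unpickle n).
pose A n := X @^-1` `]ratr (q n), +oo[.
have /choice[B hullB] := fun n => exists_cond_hull (A n).
pose h n w : \bar R := if w \in B n then +oo%E else (ratr (q n))%:E.
pose Y w := einfs (fun n => h n w) 0.
have Y_le w n : (Y w <= h n w)%E by apply: ereal_inf_lbound; exists n.
exists Y; split; [|split].
- apply/(GmeasP sG)/measurable_fun_einfs => n.
  apply: measurable_fun_ifT; rewrite ?measurable_cst //.
  by apply: measurable_fun_mem; rewrite -G_measurable; case: (hullB n).
- apply: (@negligibleS _ _ _ _ (\bigcup_n (A n `\` B n))).
    move=> w /= /negP; rewrite -ltNge => /ereal_inf_lt[_ [n _ <-]].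
    rewrite /h; case: ifPn => [_|/negP Bnw].
      by rewrite ltNge leey.
    rewrite lte_fin => qX; exists n => //; split; first by rewrite /A /= in_itv /= qX.
    by apply: contra_not Bnw => /mem_set.
  by apply: negligible_bigcup => n; case: (hullB n).
- move=> Z GZ XZ; pose C n := Z @^-1` `](ratr (q n))%:E, +oo[%classic.
  have BC n : P.-negligible (B n `\` C n).
    have [_ _ Bmin] := hullB n; apply: Bmin; first by apply: GZ; exact: emeasurable_itv.
    apply: negligibleS XZ => w []; rewrite /A /C /= !in_itv /= !andbT => qX qZ XZw.
    by apply: qZ; apply: lt_le_trans XZw; rewrite lte_fin.
  apply: (@negligibleS _ _ _ _ (\bigcup_n (B n `\` C n))); last exact: negligible_bigcup.
  move=> w /= /negP; rewrite -ltNge => /ratr_between[r /andP[Zr rY]].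
  exists (pickle r) => //; rewrite /C /= /q pickleK /= in_itv /= andbT; split.
    have := lt_le_trans rY (Y_le w (pickle r)); rewrite /h /q pickleK /=.
    by case: ifP => [/set_mem //|]; rewrite ltxx.
  by rewrite ltNge (ltW Zr).
Qed.

End conditional_ess_sup.

Section opposite.
Context {d : measure_display} {Omega : measurableType d} {R : realType}.
Variables (P : probability Omega R) (G : set (set Omega)).
Local Open Scope ereal_scope.

Lemma Gmeas_oppe (Y : Omega -> \bar R) : Gmeas G Y -> Gmeas G (fun w => - Y w).
Proof. by move=> GY; apply: (Gmeas_comp GY); exact: oppe_measurable. Qed.

Lemma cond_ess_infE (X : Omega -> R) (Z : Omega -> \bar R) :
  is_cond_ess_inf P G X Z <->
  is_cond_ess_sup P G (fun w => (- X w)%R) (fun w => - Z w).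
Proof.
split => [[GZ [ZX Zmax]]|[GZ [XZ Zmin]]].
- split; first exact: Gmeas_oppe.
  split; first by apply: filterS ZX => w; rewrite EFinN leeN2.
  move=> W GW XW; have : {ae P, forall w, - W w <= Z w}.
    by apply: Zmax; [exact: Gmeas_oppe|apply: filterS XW => w; rewrite EFinN leeNl].
  by apply: filterS => w; rewrite leeNl.
- split; first by rewrite (_ : Z = fun w => - - Z w);
    [exact: Gmeas_oppe|apply/funext => w; rewrite oppeK].
  split; first by apply: filterS XZ => w; rewrite EFinN leeN2.
  move=> W GW WX; have : {ae P, forall w, - Z w <= - W w}.
    by apply: Zmin; [exact: Gmeas_oppe|apply: filterS WX => w; rewrite EFinN leeN2].
  by apply: filterS => w; rewrite leeN2.
Qed.

Lemma cond_ess_sup_oppr (X : Omega -> R) (Y : Omega -> \bar R) :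
  is_cond_ess_sup P G (fun w => (- X w)%R) Y -> is_cond_ess_inf P G X (fun w => - Y w).
Proof.
move=> hY; apply/cond_ess_infE.
by rewrite (_ : (fun w => - - Y w) = Y) //; apply/funext => w; rewrite oppeK.
Qed.

End opposite.

Section solvency_cone.
Variable R : realType.
Implicit Types (sb sa : R) (x y : R * R).

Lemma inKD sb sa x y : inK sb sa x -> inK sb sa y ->
  inK sb sa (x.1 + y.1, x.2 + y.2).
Proof. by move=> Kx Ky r r_in; have := Kx r r_in; have := Ky r r_in => /=; lra. Qed.

Lemma inK_reflect sb sa x : inK (- sa) (- sb) x <-> inK sb sa (x.1, - x.2).
Proof.
split => Kx r r_in /=.
- by rewrite mulrN -mulNr; apply: Kx; rewrite lerN2 andbC lerN2.
- by rewrite -[r]opprK mulNr -mulrN; apply: Kx; rewrite /= lerNl andbC lerNr.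
Qed.

Lemma ask_bound_ratr (x1 x2 s : R) : x2 < 0 ->
  (forall q : rat, x1 + ratr q * x2 < 0 -> s <= ratr q) -> 0 <= x1 + s * x2.
Proof.
move=> x2_lt0 sq; rewrite leNgt; apply/negP => short.
have /rat_in_itvoo[q] : - x1 / x2 < s by rewrite ltr_ndivrMr //; lra.
rewrite in_itv /= => /andP[]; rewrite ltr_ndivrMr // => qx sq'.
by have := sq q ltac:(lra); rewrite leNgt sq'.
Qed.

End solvency_cone.

Section one_period.
Context {d : measure_display} {Omega : measurableType d} {R : realType}.
Variable P : probability Omega R.
Variable G : set (set Omega).
Hypotheses (sG : sigma_algebra setT G) (GM : G `<=` measurable).

Definition solvency_descends (sb sa sb' sa' : Omega -> R) :=
  forall z : Omega -> R * R, Gmeas2 G z ->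
    {ae P, forall w, inK (sb' w) (sa' w) (z w)} ->
    {ae P, forall w, inK (sb w) (sa w) (z w)}.

Lemma Gmeas2_reflect (z : Omega -> R * R) :
  Gmeas2 G z -> Gmeas2 G (fun w => ((z w).1, - (z w).2)).
Proof. by move=> [Gz1 Gz2]; split => //; exact: Gmeas_oppr. Qed.

Lemma solvency_descendsN (sb sa sb' sa' : Omega -> R) :
  solvency_descends sb sa sb' sa' ->
  solvency_descends (fun w => - sa w) (fun w => - sb w)
                    (fun w => - sa' w) (fun w => - sb' w).
Proof.
move=> desc z Gz Kz.
have Kz' : {ae P, forall w, inK (sb' w) (sa' w) ((z w).1, - (z w).2)}.
  by apply: filterS Kz => w /inK_reflect.
by apply: filterS (desc _ (Gmeas2_reflect Gz) Kz') => w /inK_reflect.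
Qed.

Lemma ask_le_cond_ess_sup (sb sa sb' sa' : Omega -> R) (Y : Omega -> \bar R) :
  solvency_descends sb sa sb' sa' -> Gmeas G sa ->
  {ae P, forall w, sb w <= sa w} -> is_cond_ess_sup P G sa' Y ->
  {ae P, forall w, ((sa w)%:E <= Y w)%E}.
Proof.
move=> desc Gsa sb_le_sa [GY [sa'Y _]].
pose short w := (Y w < (sa w)%:E)%E.
pose z w : R * R := (if short w then fine (Y w) else 0, if short w then -1 else 0).
have mshort : measurable_fun setT (short : g_sigma_algebraType G -> bool).
  apply: measurable_fun_lte; first exact/(GmeasP sG).
  by apply: measurableT_comp => //; exact/(GmeasP sG).
have Gz : Gmeas2 G z.
  split; apply/(GmeasP sG); apply: measurable_fun_ifT => //.
  by apply: measurableT_comp => //; exact/(GmeasP sG).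
have Kz : {ae P, forall w, inK (sb' w) (sa' w) (z w)}.
  apply: filterS sa'Y => w sa'Yw r /andP[_ r_le] /=.
  case: ifPn => [|_]; last by rewrite mulr0 addr0.
  rewrite /short; move: sa'Yw; case: (Y w) => [y||] /=.
  - by rewrite lee_fin => sa'y _; lra.
  - by move=> _; rewrite ltNge leey.
  - by rewrite leeNy_eq.
apply: filterS3 (desc z Gz Kz) sb_le_sa sa'Y => w Kzw sb_le_saw sa'Yw.
rewrite leNgt; apply/negP => shortw; have := Kzw (sa w).
rewrite /z /short /= shortw sb_le_saw lexx => /(_ isT).
move: sa'Yw shortw; case: (Y w) => [y||] /=.
- by rewrite lte_fin => _ ysa; lra.
- by move=> _; rewrite ltNge leey.
- by rewrite leeNy_eq.
Qed.

Lemma ask_solvency_of_cond_ess_sup (sb' sa' sa : Omega -> R) (Y : Omega -> \bar R)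
    (z : Omega -> R * R) :
  is_cond_ess_sup P G sa' Y -> {ae P, forall w, ((sa w)%:E <= Y w)%E} ->
  {ae P, forall w, sb' w <= sa' w} -> Gmeas2 G z ->
  {ae P, forall w, inK (sb' w) (sa' w) (z w)} ->
  {ae P, forall w, (z w).2 < 0 -> 0 <= (z w).1 + sa w * (z w).2}.
Proof.
move=> [_ [_ Ymin]] saY sb'_le_sa' [/(GmeasP sG) mz1 /(GmeasP sG) mz2] Kz.
have sa_le_q (q : rat) : {ae P, forall w,
    (z w).2 < 0 -> (z w).1 + ratr q * (z w).2 < 0 -> sa w <= ratr q}.
  pose W w : \bar R := if ((z w).2 < 0) && ((z w).1 + ratr q * (z w).2 < 0)
              then (ratr q)%:E else +oo%E.
  have GW : Gmeas G W.
    apply/(GmeasP sG); apply: measurable_fun_ifT => //; apply: measurable_and.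
      exact: measurable_fun_ltr.
    by apply: measurable_fun_ltr => //; apply: measurable_funD => //; exact: measurable_funM.
  have YW : {ae P, forall w, (Y w <= W w)%E}.
    apply: Ymin GW _; apply: filterS2 Kz sb'_le_sa' => w Kzw sb'_le_sa'w.
    have := Kzw (sa' w); rewrite sb'_le_sa'w lexx => /(_ isT) sa'_solv.
    rewrite /W; case: ifPn => [/andP[z2_lt0 q_short]|_]; last exact: leey.
    by move: (ratr q) q_short => r r_short; rewrite lee_fin; nra.
  apply: filterS2 YW saY => w YWw saYw z2_lt0 q_short.
  by have := le_trans saYw YWw; rewrite /W z2_lt0 q_short lee_fin.
apply: filterS (ae_forall_count sa_le_q) => w sa_le z2_lt0.
by apply: (ask_bound_ratr z2_lt0) => q; exact: sa_le.
Qed.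

Lemma bid_solvency_of_cond_ess_inf (sb' sa' sb : Omega -> R) (Z : Omega -> \bar R)
    (z : Omega -> R * R) :
  is_cond_ess_inf P G sb' Z -> {ae P, forall w, (Z w <= (sb w)%:E)%E} ->
  {ae P, forall w, sb' w <= sa' w} -> Gmeas2 G z ->
  {ae P, forall w, inK (sb' w) (sa' w) (z w)} ->
  {ae P, forall w, 0 < (z w).2 -> 0 <= (z w).1 + sb w * (z w).2}.
Proof.
move=> /cond_ess_infE hZ Zsb sb'_le_sa' Gz Kz.
have Zsb' : {ae P, forall w, ((- sb w)%:E <= - Z w)%E}.
  by apply: filterS Zsb => w; rewrite EFinN leeN2.
have sa'_le_sb' : {ae P, forall w, - sa' w <= - sb' w}.
  by apply: filterS sb'_le_sa' => w; rewrite lerN2.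
have Kz' : {ae P, forall w, inK (- sa' w) (- sb' w) ((z w).1, - (z w).2)}.
  by apply: filterS Kz => w Kzw; apply/inK_reflect; rewrite /= opprK -surjective_pairing.
apply: filterS (ask_solvency_of_cond_ess_sup hZ Zsb' sa'_le_sb' (Gmeas2_reflect Gz) Kz').
by move=> w /=; rewrite oppr_lt0 mulrNN.
Qed.

Lemma cond_ess_inf_le_bid (sb sa sb' sa' : Omega -> R) (Z : Omega -> \bar R) :
  solvency_descends sb sa sb' sa' -> Gmeas G sb ->
  {ae P, forall w, sb w <= sa w} -> is_cond_ess_inf P G sb' Z ->
  {ae P, forall w, (Z w <= (sb w)%:E)%E}.
Proof.
move=> /solvency_descendsN desc Gsb sb_le_sa /cond_ess_infE hZ.
have sa_le_sb : {ae P, forall w, - sa w <= - sb w}.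
  by apply: filterS sb_le_sa => w; rewrite lerN2.
apply: filterS (ask_le_cond_ess_sup desc (Gmeas_oppr Gsb) sa_le_sb hZ) => w.
by rewrite EFinN leeN2.
Qed.

Lemma solvency_descendsP (sb sa sb' sa' : Omega -> R) :
  Gmeas G sb -> Gmeas G sa -> Gmeas measurable sb' -> Gmeas measurable sa' ->
  {ae P, forall w, sb w <= sa w} -> {ae P, forall w, sb' w <= sa' w} ->
  solvency_descends sb sa sb' sa' <->
  (exists Y, is_cond_ess_sup P G sa' Y /\ {ae P, forall w, ((sa w)%:E <= Y w)%E}) /\
  (exists Z, is_cond_ess_inf P G sb' Z /\ {ae P, forall w, (Z w <= (sb w)%:E)%E}).
Proof.
move=> Gsb Gsa msb' msa' sb_le_sa sb'_le_sa'; split => [desc|].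
- have [Y hY] := exists_cond_ess_sup P sG GM msa'.
  have [Y' /cond_ess_sup_oppr hZ] := exists_cond_ess_sup P sG GM (Gmeas_oppr msb').
  split; [exists Y|exists (fun w => - Y' w)%E]; split => //.
  - exact: ask_le_cond_ess_sup desc Gsa sb_le_sa hY.
  - exact: cond_ess_inf_le_bid desc Gsb sb_le_sa hZ.
- move=> [[Y [hY saY]] [Z [hZ Zsb]]] z Gz Kz.
  have ask := ask_solvency_of_cond_ess_sup hY saY sb'_le_sa' Gz Kz.
  have bid := bid_solvency_of_cond_ess_inf hZ Zsb sb'_le_sa' Gz Kz.
  have at_ask' : {ae P, forall w, 0 <= (z w).1 + sa' w * (z w).2}.
    by apply: filterS2 Kz sb'_le_sa' => w Kzw le_w; apply: Kzw; rewrite le_w lexx.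
  apply: filterS3 ask bid at_ask' => w.
  move: (z w) => [z1 z2] /= askw bidw at_ask'w r /andP[sb_le_r r_le_sa] /=.
  case: (ltrgt0P z2) => [z2_gt0|z2_lt0|z2_0].
  + by have := bidw z2_gt0; nra.
  + by have := askw z2_lt0; nra.
  + by move: at_ask'w; rewrite z2_0 !mulr0.
Qed.

End one_period.

Lemma nat_down_ind (Q : nat -> Prop) m n : Q n ->
  (forall k, (m <= k < n)%N -> Q k.+1 -> Q k) -> forall k, (m <= k <= n)%N -> Q k.
Proof.
move=> Qn step k /andP[mk kn].
suff Qsub j : (j <= n - m)%N -> Q (n - j)%N by rewrite -(subKn kn); apply: Qsub; lia.
elim: j => [|j IH] jnm; first by rewrite subn0.
by apply: step; [lia|rewrite (_ : (n - j.+1).+1 = n - j)%N; [apply: IH|]; lia].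
Qed.

Section multi_period.
Context {d : measure_display} {Omega : measurableType d} {R : realType}.
Variables (P : probability Omega R) (F : nat -> set (set Omega)) (N : nat).
Variables (Sb Sa : nat -> Omega -> R).
Hypothesis hF : is_filtration F N.

Let sF t : (t <= N)%N -> sigma_algebra setT (F t). Proof. by case: hF => + _; apply. Qed.
Let F_incr s t : (s <= t)%N -> (t <= N)%N -> F s `<=` F t.
Proof. by case: hF => _ [_]; apply. Qed.

Lemma NA2_solvency_descends : NA2 P F Sb Sa N -> forall t, (t < N)%N ->
  solvency_descends P (F t) (Sb t) (Sa t) (Sb t.+1) (Sa t.+1).
Proof.
move=> NA t tN z [Gz1 Gz2] Kz.
pose xi u w : R * R := (if u == t.+1 then - (z w).1 else 0, if u == t.+1 then - (z w).2 else 0).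
have sum_xi (a : R) : \sum_(t <= u < N.+1) (if u == t.+1 then - a else 0) = - a.
  by rewrite -big_mkcond big_nat1_eq /= ltnS tN leqnSn.
suff : meets_solvent P F Sb Sa N t z by move/(NA t (ltnW tN) z (conj Gz1 Gz2)) => [].
exists xi; split => [u tu uN|].
- rewrite /L0mK /xi; case: eqP => [->|_] /=; last first.
    split; first by split; apply: (Gmeas_cst (sF uN)).
    by apply: filterE => w r _ /=; rewrite oppr0 mulr0 addr0.
  split; last by apply: filterS Kz => w; rewrite !opprK -surjective_pairing.
  by split; apply: (Gmeas_sub (F_incr (leqnSn t) tN)); exact: Gmeas_oppr.
- rewrite /xi /=; under eq_fun do rewrite !sum_xi !subrr.
  split; first by split; apply: (Gmeas_cst (sF (leqnn N))).
  by apply: filterE => w r _ /=; rewrite mulr0 addr0.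
Qed.

Lemma solvency_descends_NA2 :
  (forall t, (t < N)%N -> solvency_descends P (F t) (Sb t) (Sa t) (Sb t.+1) (Sa t.+1)) ->
  NA2 P F Sb Sa N.
Proof.
move=> desc t tN eta [Geta1 Geta2] [xi [Lxi [_ KN]]]; split => //.
pose V k w : R * R := ((eta w).1 + \sum_(t <= u < k) (xi u w).1,
                       (eta w).2 + \sum_(t <= u < k) (xi u w).2).
have GV k m : (t <= m)%N -> (m <= N)%N -> (k <= m.+1)%N -> Gmeas2 (F m) (V k).
  move=> tm mN km; have Gm := GmeasP (sF mN).
  have Gxi u : (t <= u < k)%N -> Gmeas2 (F m) (xi u).
    move=> /andP[tu uk]; have [[Gxi1 Gxi2] _] := Lxi u tu ltac:(lia).
    by split; apply: (Gmeas_sub (F_incr (_ : u <= m)%N mN)) => //; lia.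
  split; apply/Gm/measurable_funD; apply/Gm.
  - exact: Gmeas_sub (F_incr tm mN) Geta1.
  - by apply: (Gmeas_sum (sF mN)) => u /Gxi[].
  - exact: Gmeas_sub (F_incr tm mN) Geta2.
  - by apply: (Gmeas_sum (sF mN)) => u /Gxi[].
have V_back k : (t <= k)%N -> (k <= N)%N ->
    {ae P, forall w, inK (Sb k w) (Sa k w) (V k.+1 w)} ->
    {ae P, forall w, inK (Sb k w) (Sa k w) (V k w)}.
  move=> tk kN KV; have [_ Kxi] := Lxi k tk kN.
  apply: filterS2 KV Kxi => w KVw Kxiw; have := inKD KVw Kxiw.
  by rewrite /V !big_nat_recr //= !addrA !addrK.
have KV : forall k, (t <= k <= N)%N ->
    {ae P, forall w, inK (Sb k w) (Sa k w) (V k.+1 w)}.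
  apply: (nat_down_ind (Q := fun k => {ae P, forall w, inK (Sb k w) (Sa k w) (V k.+1 w)})).
    exact: KN.
  move=> k /andP[tk kN] KV.
  apply: (desc k kN _ (GV k.+1 k tk (ltnW kN) (leqnn _))).
  exact: V_back (leqW tk) kN KV.
have := V_back t (leqnn t) tN (KV t ltac:(lia)).
by apply: filterS => w; rewrite /V !big_geq // !addr0 -surjective_pairing.
Qed.

End multi_period.

Theorem theorem9p1 (d : measure_display) (Omega : measurableType d) (R : realType)
  (P : probability Omega R) (F : nat -> set (set Omega)) (N : nat)
  (Sb Sa : nat -> Omega -> R) :
  P_complete P ->
  is_filtration F N ->
  trivial_sigma P (F 0%N) ->
  (forall t, (t <= N)%N -> Gmeas (F t) (Sb t) /\ Gmeas (F t) (Sa t)) ->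
  (forall t, (t <= N)%N -> {ae P, forall w, 0 < Sb t w <= Sa t w}) ->
  (NA2 P F Sb Sa N <->
   forall t, (t < N)%N ->
     (exists Y, is_cond_ess_sup P (F t) (Sa t.+1) Y /\
                {ae P, forall w, ((Sa t w)%:E <= Y w)%E}) /\
     (exists Z, is_cond_ess_inf P (F t) (Sb t.+1) Z /\
                {ae P, forall w, (Z w <= (Sb t w)%:E)%E})).
Proof.
move=> _ hF _ GS Spos; have [sF [FM _]] := hF.
have bid_le_ask t : (t <= N)%N -> {ae P, forall w, Sb t w <= Sa t w}.
  by move=> tN; apply: filterS (Spos t tN) => w /andP[].
have stepP t : (t < N)%N ->
    solvency_descends P (F t) (Sb t) (Sa t) (Sb t.+1) (Sa t.+1) <->
    (exists Y, is_cond_ess_sup P (F t) (Sa t.+1) Y /\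
               {ae P, forall w, ((Sa t w)%:E <= Y w)%E}) /\
    (exists Z, is_cond_ess_inf P (F t) (Sb t.+1) Z /\
               {ae P, forall w, (Z w <= (Sb t w)%:E)%E}).
  move=> tN; have [Gsb Gsa] := GS t (ltnW tN); have [Gsb' Gsa'] := GS t.+1 tN.
  exact: (solvency_descendsP (sF t (ltnW tN)) (FM t (ltnW tN)) Gsb Gsa
    (Gmeas_sub (FM t.+1 tN) Gsb') (Gmeas_sub (FM t.+1 tN) Gsa')
    (bid_le_ask t (ltnW tN)) (bid_le_ask t.+1 tN)).
split => [NA t tN|conds].
- by apply/stepP => //; exact: NA2_solvency_descends hF NA t tN.
- by apply: solvency_descends_NA2 hF _ => t tN; apply/stepP => //; exact: conds.
Qed.
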